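(* Let $\mathbf w\in\mathbb R^m$ and let $X,Y$ be distinct candidates. The following are equivalent: (i) for all profiles $\mathbf p,\mathbf q\in P$ with $\mathbf p\sim_{X,Y}\mathbf q$, $\mathbf p\cdot\mathbf v_{X>Y}>0$ implies $\mathbf q\cdot\mathbf v_{X>Y}>0$; (ii) every $T\in SO(P)$ with $T(\mathbf r_{X>Y})=\mathbf r_{X>Y}$ satisfies $T\big((\mathbf v_{X>Y})_+\big)\subseteq(\mathbf v_{X>Y})_+$.
   Context: Fix an integer $n\ge 2$ and a set $\mathbf C$ of $n$ candidates. Fix a composition $\lambda=(\lambda_1,\dots,\lambda_m)$ of $n$ (positive integers with $\sum_i\lambda_i=n$), write $|\lambda|=m$ and $[m]=\{1,\dots,m\}$. A ballot is a function $b:\mathbf C\to[m]$ with $|b^{-1}(i)|=\lambda_i$ for every $i$; $\mathbf C_\lambda$ denotes the set of ballots. The profile space is $P=\mathbb R^{\mathbf C_\lambda}$ with basis $\{\delta_b\}$ (indicator functions) and inner product $\mathbf p\cdot\mathbf q=\sum_b\mathbf p(b)\mathbf q(b)$; $\mathbf 1=\sum_b\delta_b$. For candidates $X,Y$: $\mathbf a_{X>Y}=\sum_{b:\,b(X)<b(Y)}\delta_b$, $\mathbf r_{X>Y}=\mathbf a_{X>Y}-\mathbf a_{Y>X}$. For $\mathbf w\in\mathbb R^m$ (a function $[m]\to\mathbb R$), $\mathbf v_X\in P$ is $\mathbf v_X(b)=\mathbf w(b(X))$ and $\mathbf v_{X>Y}=\mathbf v_X-\mathbf v_Y$. For $\mathbf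 v\in P$, $(\mathbf v)_+=\{\mathbf u\in P:\mathbf u\cdot\mathbf v>0\}$. Two profiles are $X,Y$-equivalent, $\mathbf p\sim_{X,Y}\mathbf q$, if $(\mathbf p-\mathbf q)\cdot\mathbf a_{X>Y}=0$ and $(\mathbf p-\mathbf q)\cdot\mathbf a_{Y>X}=0$. $SO(P)$ denotes the group of linear isometries of $P$ of determinant $1$. *)

From HB Require Import structures.
From mathcomp Require Import all_boot all_order all_algebra.
Set Implicit Arguments. Unset Strict Implicit. Unset Printing Implicit Defensive.
Import Order.TTheory GRing.Theory Num.Theory.
Local Open Scope ring_scope.

Section Voting.
Variables (R : rcfType) (C : finType) (lam : seq nat).

(* [m] = {1..m} is represented by 'I_m = {0..m-1}, m = size lam;
   position i (0-based) has prescribed size nth 0 lam i. *)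
Definition is_ballot (b : {ffun C -> 'I_(size lam)}) : bool :=
  [forall i : 'I_(size lam), #|[set c | b c == i]| == nth 0%N lam i].

Definition ballot := {b : {ffun C -> 'I_(size lam)} | is_ballot b}.

(* Profile space P = R^{C_lam}, coordinates indexed through enum_val. *)
Definition profile := 'rV[R]_#|{: ballot}|.

Definition pdot (p q : profile) : R := \sum_(j < #|{: ballot}|) p 0 j * q 0 j.

Definition of_fun (f : ballot -> R) : profile := \row_j f (enum_val j).

Definition aprof (X Y : C) : profile :=
  of_fun (fun b => if (val b X < val b Y)%N then 1 else 0).

Definition rprof (X Y : C) : profile := aprof X Y - aprof Y X.

Definition vprof (w : 'I_(size lam) -> R) (X : C) : profile :=
  of_fun (fun b => w (val b X)).

Definition vprof2 (w : 'I_(size lam) -> R) (X Y : C) : profile :=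
  vprof w X - vprof w Y.

Definition pos_half (v : profile) (u : profile) : Prop := 0 < pdot u v.

Definition xy_equiv (X Y : C) (p q : profile) : Prop :=
  pdot (p - q) (aprof X Y) = 0 /\ pdot (p - q) (aprof Y X) = 0.

Definition act (T : 'M[R]_#|{: ballot}|) (p : profile) : profile := p *m T.

Definition in_SO (T : 'M[R]_#|{: ballot}|) : Prop :=
  (forall p q : profile, pdot (act T p) (act T q) = pdot p q) /\ \det T = 1.

End Voting.

(* Both conditions say that v_{X>Y} is a multiple of r_{X>Y}, i.e. that the
   margin w(b X) - w(b Y) takes one and the same value on every ballot b ranking
   X above Y.  If so, p . v_{X>Y} only depends on p . a_{X>Y} and p . a_{Y>X},
   and an isometry fixing r_{X>Y} preserves it.  If not, take ballots b1, b2
   ranking X above Y with margins differing by c <> 0 and u = c (δ_b1 - δ_b2),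
   so u . v_{X>Y} = c^2 > 0.  Then u ~_{X,Y} 0, violating (i); and the even
   permutation of ballots exchanging b1 <-> b2 and their X/Y-swaps fixes
   r_{X>Y} and sends u to -u, violating (ii). *)

From HB Require Import structures.
From mathcomp Require Import all_boot all_order all_algebra.
From mathcomp Require Import fingroup perm.
Import Order.TTheory GRing.Theory Num.Theory.
Local Open Scope ring_scope.
Set Implicit Arguments. Unset Strict Implicit.

Lemma mul_perm_mxE (R : pzSemiRingType) n (p : 'rV[R]_n) (s : {perm 'I_n}) j :
  (p *m perm_mx s) 0 j = p 0 ((s^-1)%g j).
Proof. by rewrite -[s in perm_mx s]invgK -col_permE mxE. Qed.

Lemma delta_mul_perm_mx (R : pzSemiRingType) n (s : {perm 'I_n}) (j : 'I_n) :
  delta_mx 0 j *m perm_mx s = delta_mx 0 (s j) :> 'rV[R]_n.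
Proof.
apply/rowP => k; rewrite mul_perm_mxE !mxE eqxx /=.
by rewrite -(inj_eq (@perm_inj _ s)) permKV eq_sym.
Qed.

Lemma mul_perm_mx_id (R : pzSemiRingType) n (p : 'rV[R]_n) (s : {perm 'I_n}) :
  (forall k, p 0 (s k) = p 0 k) -> p *m perm_mx s = p.
Proof. by move=> ps; apply/rowP => k; rewrite mul_perm_mxE -{2}(permKV s k) ps. Qed.

Lemma tperm_invariant (T : finType) (U : Type) (f : T -> U) x y k :
  f x = f y -> f (tperm x y k) = f k.
Proof. by move=> fxy; case: tpermP => [->|->|//]; rewrite fxy. Qed.

Section Profiles.
Variables (R : rcfType) (C : finType) (lam : seq nat).
Local Notation profile := (profile R C lam).
Local Notation pdot := (@pdot R C lam).

Lemma pdotC (p q : profile) : pdot p q = pdot q p.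
Proof. by apply: eq_bigr => j _; rewrite mulrC. Qed.

Lemma pdot0l (p : profile) : pdot 0 p = 0.
Proof. by apply: big1 => j _; rewrite mxE mul0r. Qed.

Lemma pdotBl (p q r : profile) : pdot (p - q) r = pdot p r - pdot q r.
Proof.
rewrite /pdot -sumrB; apply: eq_bigr => j _.
by rewrite !mxE mulrBl.
Qed.

Lemma pdotZl (a : R) (p r : profile) : pdot (a *: p) r = a * pdot p r.
Proof. by rewrite /pdot mulr_sumr; apply: eq_bigr => j _; rewrite !mxE mulrA. Qed.

Lemma pdotZr (a : R) (p r : profile) : pdot p (a *: r) = a * pdot p r.
Proof. by rewrite pdotC pdotZl pdotC. Qed.

Lemma pdot_delta j (r : profile) : pdot (delta_mx 0 j) r = r 0 j.
Proof.
rewrite /pdot (bigD1 j) //= big1 ?addr0; first by rewrite mxE !eqxx mul1r.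
by move=> k /negbTE nkj; rewrite mxE nkj andbF mul0r.
Qed.

Lemma pdot_deltaB j k (r : profile) :
  pdot (delta_mx 0 j - delta_mx 0 k) r = r 0 j - r 0 k.
Proof. by rewrite pdotBl !pdot_delta. Qed.

Lemma pdot_perm_mx (s : {perm 'I_#|{: ballot C lam}|}) (p q : profile) :
  pdot (p *m perm_mx s) (q *m perm_mx s) = pdot p q.
Proof.
rewrite /pdot (reindex_inj (@perm_inj _ s)) /=.
by apply: eq_bigr => j _; rewrite !mul_perm_mxE permK.
Qed.

Lemma even_perm_mx_in_SO (s : {perm 'I_#|{: ballot C lam}|}) :
  ~~ odd_perm s -> in_SO (perm_mx s : 'M[R]_#|{: ballot C lam}|).
Proof.
move=> even_s; split; first by move=> p q; apply: pdot_perm_mx.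
by rewrite det_perm (negbTE even_s).
Qed.

End Profiles.

Section Swap.
Variables (C : finType) (lam : seq nat) (X Y : C).

Lemma swap_ballot_proof (b : ballot C lam) :
  is_ballot ([ffun c => val b (tperm X Y c)] : {ffun C -> 'I_(size lam)}).
Proof.
case: b => b /= /forallP hb; apply/forallP => i.
have -> : [set c | [ffun c => b (tperm X Y c)] c == i]
          = tperm X Y @^-1: [set c | b c == i].
  by apply/setP => c; rewrite !inE ffunE.
by rewrite card_preimset; [exact: hb | exact: perm_inj].
Qed.

Definition swap_ballot (b : ballot C lam) : ballot C lam :=
  exist (@is_ballot C lam) _ (swap_ballot_proof b).

Lemma swap_ballotX b : val (swap_ballot b) X = val b Y.
Proof. by rewrite /= ffunE tpermL. Qed.

Lemma swap_ballotY b : val (swap_ballot b) Y = val b X.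
Proof. by rewrite /= ffunE tpermR. Qed.

Lemma swap_ballot_below (b : ballot C lam) :
  (val b X < val b Y)%N -> (val (swap_ballot b) Y < val (swap_ballot b) X)%N.
Proof. by rewrite swap_ballotX swap_ballotY. Qed.

Lemma enum_rank_above_below (b b' : ballot C lam) :
  (val b X < val b Y)%N -> (val b' Y < val b' X)%N -> enum_rank b != enum_rank b'.
Proof.
by move=> XY YX; apply: contraTneq XY => /enum_rank_inj ->; rewrite -leqNgt ltnW.
Qed.

End Swap.

Section Margin.
Variables (R : rcfType) (C : finType) (lam : seq nat).
Variables (w : 'I_(size lam) -> R) (X Y : C).
Local Notation profile := (profile R C lam).
Local Notation pdot := (@pdot R C lam).
Local Notation v := (vprof2 w X Y).
Local Notation r := (rprof R lam X Y).

Definition margin (b : ballot C lam) : R := w (val b X) - w (val b Y).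

Definition uniform_margin : Prop :=
  forall b1 b2 : ballot C lam, (val b1 X < val b1 Y)%N -> (val b2 X < val b2 Y)%N ->
    margin b1 = margin b2.

Definition xy_invariant : Prop :=
  forall p q : profile, xy_equiv X Y p q -> 0 < pdot p v -> 0 < pdot q v.

Definition SO_invariant : Prop :=
  forall T : 'M[R]_#|{: ballot C lam}|, in_SO T -> act T r = r ->
    forall u : profile, pos_half v u -> pos_half v (act T u).

Lemma margin_swap_ballot b : margin (swap_ballot X Y b) = - margin b.
Proof. by rewrite /margin swap_ballotX swap_ballotY opprB. Qed.

Lemma vprof2E j : v 0 j = margin (enum_val j).
Proof. by rewrite !mxE. Qed.

Lemma rprofE j :
  r 0 j = (if (val (enum_val j) X < val (enum_val j) Y)%N then 1 else 0)
        - (if (val (enum_val j) Y < val (enum_val j) X)%N then 1 else 0).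
Proof. by rewrite !mxE. Qed.

Lemma aprof_above (b : ballot C lam) :
  (val b X < val b Y)%N -> aprof R lam X Y 0 (enum_rank b) = 1 /\
                           aprof R lam Y X 0 (enum_rank b) = 0.
Proof. by move=> XY; rewrite !mxE enum_rankK XY ltnNge ltnW. Qed.

Lemma rprof_above (b : ballot C lam) : (val b X < val b Y)%N -> r 0 (enum_rank b) = 1.
Proof. by move=> XY; rewrite rprofE enum_rankK XY ltnNge ltnW // subr0. Qed.

Lemma rprof_below (b : ballot C lam) : (val b Y < val b X)%N -> r 0 (enum_rank b) = -1.
Proof. by move=> YX; rewrite rprofE enum_rankK YX ltnNge ltnW // sub0r. Qed.

Lemma uniform_margin_proportional :
  uniform_margin -> exists a : R, v = a *: r.
Proof.
move=> unif.
exists (if [pick b : ballot C lam | (val b X < val b Y)%N] is Some b0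
        then margin b0 else 0).
apply/rowP => j; rewrite vprof2E mxE rprofE; set b := enum_val j.
case: ltngtP => cmp.
- case: pickP => [b0 h0|/(_ b)]; last by rewrite cmp.
  by rewrite subr0 mulr1; apply: unif.
- have sw : (val (swap_ballot X Y b) X < val (swap_ballot X Y b) Y)%N.
    by rewrite swap_ballotX swap_ballotY.
  case: pickP => [b0 h0|/(_ (swap_ballot X Y b))]; last by rewrite sw.
  by rewrite sub0r mulrN1 -(unif _ _ sw h0) margin_swap_ballot opprK.
- by rewrite /margin (val_inj cmp) !subrr mulr0.
Qed.

Lemma proportional_xy_invariant a : v = a *: r -> xy_invariant.
Proof.
move=> va p q [eqXY eqYX]; suff -> : pdot q v = pdot p v by [].
apply/eqP; rewrite eq_sym -subr_eq0 -pdotBl va pdotZr /rprof.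
by rewrite pdotC pdotBl pdotC eqXY pdotC eqYX subrr mulr0.
Qed.

Lemma proportional_SO_invariant a : v = a *: r -> SO_invariant.
Proof. by move=> va T [iso _] Tr u; rewrite /pos_half va !pdotZr -{2}Tr iso. Qed.

Lemma margin_witness (b1 b2 : ballot C lam) :
  let u := (margin b1 - margin b2) *: (delta_mx 0 (enum_rank b1) - delta_mx 0 (enum_rank b2)) in
  margin b1 != margin b2 -> pos_half v u.
Proof.
move=> u ne; rewrite /pos_half pdotZl pdot_deltaB !vprof2E !enum_rankK.
by rewrite -expr2 exprn_even_gt0 // subr_eq0.
Qed.

Lemma xy_invariant_uniform_margin : xy_invariant -> uniform_margin.
Proof.
move=> inv b1 b2 above1 above2; apply/eqP/negPn/negP => ne.
have [a1X a1Y] := aprof_above above1; have [a2X a2Y] := aprof_above above2.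
suff : 0 < pdot 0 v by rewrite pdot0l ltxx.
apply: inv (margin_witness ne).
by split; rewrite subr0 pdotC pdotZr pdotC pdot_deltaB ?a1X ?a2X ?a1Y ?a2Y subrr mulr0.
Qed.

Lemma SO_invariant_uniform_margin : SO_invariant -> uniform_margin.
Proof.
move=> inv b1 b2 above1 above2; apply/eqP/negPn/negP => ne.
pose j1 := enum_rank b1; pose j2 := enum_rank b2.
pose j3 := enum_rank (swap_ballot X Y b1); pose j4 := enum_rank (swap_ballot X Y b2).
have below1 := swap_ballot_below above1; have below2 := swap_ballot_below above2.
have n12 : j1 != j2 by apply: contraNneq ne => /enum_rank_inj ->.
have n34 : j3 != j4.
  apply: contraNneq ne => /enum_rank_inj e34.
  by apply/eqP; rewrite -[LHS]opprK -margin_swap_ballot e34 margin_swap_ballot opprK.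
(* The second transposition makes [s] even while keeping [r] fixed. *)
pose s := (tperm j1 j2 * tperm j3 j4)%g.
have [sj1 sj2] : s j1 = j2 /\ s j2 = j1.
  have n13 := enum_rank_above_below above1 below1.
  have n14 := enum_rank_above_below above1 below2.
  have n23 := enum_rank_above_below above2 below1.
  have n24 := enum_rank_above_below above2 below2.
  by rewrite !permM tpermL tpermR !tpermD // eq_sym.
have Tr : act (perm_mx s) r = r.
  apply: mul_perm_mx_id => k; rewrite permM !(tperm_invariant (f := fun j => r 0 j)) //.
    by rewrite /j1 /j2 !rprof_above.
  by rewrite /j3 /j4 !rprof_below.
have even_s : ~~ odd_perm s by rewrite odd_mul_tperm odd_tperm n12 n34.
have /(inv _ (even_perm_mx_in_SO R even_s) Tr) := margin_witness ne.
set u := _ *: _; have -> : act (perm_mx s) u = - u.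
  rewrite /act -scalemxAl mulmxBl !delta_mul_perm_mx -/j1 -/j2 sj1 sj2 /u -scalerN.
  by congr (_ *: _); rewrite opprB.
rewrite /pos_half -scaleN1r pdotZl mulN1r oppr_gt0 => /ltW.
by rewrite leNgt (margin_witness ne).
Qed.

End Margin.

Theorem mainTheorem7 (R : rcfType) (C : finType) (lam : seq nat)
  (hn : (2 <= #|C|)%N)
  (hpos : all (fun k => 0 < k)%N lam) (hsum : sumn lam = #|C|)
  (w : 'I_(size lam) -> R) (X Y : C) (hXY : X != Y) :
  (forall p q : profile R C lam, xy_equiv X Y p q ->
     0 < pdot p (vprof2 w X Y) -> 0 < pdot q (vprof2 w X Y))
  <->
  (forall T : 'M[R]_#|{: ballot C lam}|, in_SO T ->
     act T (rprof R lam X Y) = rprof R lam X Y ->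
     forall u : profile R C lam, pos_half (vprof2 w X Y) u ->
       pos_half (vprof2 w X Y) (act T u)).
Proof.
split=> inv.
- have [a va] := uniform_margin_proportional (xy_invariant_uniform_margin inv).
  exact: proportional_SO_invariant va.
- have [a va] := uniform_margin_proportional (SO_invariant_uniform_margin inv).
  exact: proportional_xy_invariant va.
Qed.
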